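(* For every permutation $\sigma$ and every Cayley permutation $y$, $$\mathcal{F}(\sigma)=\gamma\bigl(\mathrm{Modasc}[\sigma^{-1}]\bigr)\qquad\text{and}\qquad \gamma\bigl(\mathrm{Modasc}[y]\bigr)=\mathcal{F}\bigl(\gamma(y)\bigr).$$ In other words, the set of Fishburn permutations avoiding $\sigma$ is the image under $\gamma$ of the set of modified ascent sequences avoiding every Cayley permutation in the class $[\sigma^{-1}]$.
   Context: A Cayley permutation of length $n$ is a word $x=x(1)\cdots x(n)$ of positive integers in which every integer from $1$ to $\max(x)$ occurs (the empty word is the unique one of length $0$); $\mathrm{Cay}_n$ is the set of these and $\mathrm{Cay}=\bigcup_n\mathrm{Cay}_n$. Permutations of $[n]$ (in one-line notation) are exactly the Cayley permutations without repeated letters; $\mathcal{S}$ denotes the set of all permutations. A Cayley permutation $y$ of length $k$ is contained in $x$ of length $n$ (written $y\le x$) if there are indices $i_1<\dots<i_k$ with $x(i_s)<x(i_t)\iff y(s)<y(t)$ and $x(i_s)=x(i_t)\iff y(s)=y(t)$ for all $s,t$; otherwise $x$ avoids $y$. For $E\subseteq\mathrm{Cay}$ and a set $P$ of patterns, $E(P)$ is the set of elements of $E$ avoiding every pattern in $P$. For $x\in\mathrm{Cay}_n$, $\gamma(x)\in\mathcal{S}_n$ is obtained by sorting the pairs $(x(i),i)$, $i=1,\dots,n$, in increasing order of first coordinate, breaking ties by decreasing order of second coordinate, and reading off the second coordinates. (For a permutation $\pi$, $\gamma(\pi)=\pi^{-1}$.) Write $x\sim y$ iff $\gamma(x)=\gamma(y)$,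 and let $[y]$ be the equivalence class of $y$. For $E\subseteq\mathrm{Cay}$ and $y\in\mathrm{Cay}$, $E[y]$ denotes the set of $x\in E$ that avoid every element of $[y]$; $\gamma(E)=\{\gamma(x):x\in E\}$. Modified ascent sequences: $\mathrm{Modasc}_0=\{\text{empty word}\}$, $\mathrm{Modasc}_1=\{1\}$, and for $n\ge2$, $x\in\mathrm{Modasc}_n$ iff there is $v\in\mathrm{Modasc}_{n-1}$ with last letter $b$ such that either $x=va$ with $1\le a\le b$, or $x=\tilde v a$ with $b<a\le 2+\mathrm{asc}(v)$, where $\mathrm{asc}(v)$ is the number of $i$ with $v(i)<v(i+1)$ and $\tilde v$ is obtained from $v$ by increasing by one every entry $c\ge a$. $\mathrm{Modasc}=\bigcup_n\mathrm{Modasc}_n\subseteq\mathrm{Cay}$. Fishburn permutations: a permutation $\pi$ of $[n]$ is Fishburn if there are no indices $i$ and $k>i+1$ with $\pi(i)<\pi(i+1)$ and $\pi(k)=\pi(i)-1$ (i.e. $\pi$ avoids the bivincular pattern $(231,\{1\},\{1\})$). $\mathcal{F}$ is the set of Fishburn permutations, and $\mathcal{F}(\sigma)$ the set of those avoiding $\sigma$. (The restriction of $\gamma$ to $\mathrm{Modasc}$ is a bijection onto $\mathcal{F}$.) *)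

(* Words are sequences of naturals; positions in a seq are
   0-based, letters are the (positive) values. *)
From mathcomp Require Import all_boot.
Set Implicit Arguments. Unset Strict Implicit. Unset Printing Implicit Defensive.

Definition wmax (x : seq nat) : nat := foldr maxn 0 x.

Definition is_cayley (x : seq nat) : bool :=
  all (fun a => 0 < a) x && all (fun j => j \in x) (iota 1 (wmax x)).

Definition is_perm (p : seq nat) : bool := perm_eq p (iota 1 (size p)).

Definition perm_inv (p : seq nat) : seq nat :=
  map (fun j => (index j p).+1) (iota 1 (size p)).

Definition order_iso (a y : seq nat) : Prop :=
  size a = size y /\
  forall s t, s < size y -> t < size y ->
    ((nth 0 a s < nth 0 a t) = (nth 0 y s < nth 0 y t)) /\
    ((nth 0 a s == nth 0 a t) = (nth 0 y s == nth 0 y t)).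

Definition contains (x y : seq nat) : Prop :=
  exists m : bitseq, size m = size x /\ order_iso (mask m x) y.

Definition avoids (x y : seq nat) : Prop := ~ contains x y.

Definition gamma_rel (p q : nat * nat) : bool :=
  (p.1 < q.1) || ((p.1 == q.1) && (q.2 <= p.2)).

Definition gamma (x : seq nat) : seq nat :=
  map snd (sort gamma_rel (zip x (iota 1 (size x)))).

(* E[y] : elements of E avoiding every Cayley permutation z with z ~ y *)
Definition avoid_class (E : seq nat -> Prop) (y : seq nat) (x : seq nat) : Prop :=
  E x /\ forall z, is_cayley z -> gamma z = gamma y -> avoids x z.

Definition asc (v : seq nat) : nat :=
  count (fun p : nat * nat => p.1 < p.2) (zip v (behead v)).

Definition bump_ge (a : nat) (v : seq nat) : seq nat :=
  map (fun c => if a <= c then c.+1 else c) v.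

Inductive modasc : seq nat -> Prop :=
| modasc_nil : modasc [::]
| modasc_one : modasc [:: 1]
| modasc_low v a : modasc v -> 0 < size v ->
    1 <= a -> a <= last 0 v -> modasc (rcons v a)
| modasc_high v a : modasc v -> 0 < size v ->
    last 0 v < a -> a <= (asc v).+2 -> modasc (rcons (bump_ge a v) a).

Definition is_fishburn (p : seq nat) : Prop :=
  is_perm p /\
  ~ (exists i k, i.+1 < k /\ k < size p /\
       nth 0 p i < nth 0 p i.+1 /\ nth 0 p k = nth 0 p i - 1).

Definition fishburn_avoiding (sigma p : seq nat) : Prop :=
  is_fishburn p /\ avoids p sigma.

Definition gamma_image (E : seq nat -> Prop) (p : seq nat) : Prop :=
  exists x, E x /\ gamma x = p.

(* gamma(x) lists the positions of x sorted by letter, ties broken from right to left,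
   so it only depends on the relative order of the letters of x, and restricting x to a
   set of positions restricts gamma(x) to that set of values.  Hence x avoids the whole
   class [y] iff gamma(x) avoids gamma(y) (a witness can be standardized into a Cayley
   permutation), and since gamma(sigma^-1) = sigma both identities reduce to
   gamma(Modasc) = F.  Appending a letter a to a word inserts the new maximum into gamma
   right after the positions of the letters smaller than a.  In a modified ascent
   sequence the ascent tops are exactly the leftmost copies of the letters, and this
   rules out the Fishburn pattern in gamma(x).  Conversely, deleting the maximum of a
   Fishburn permutation leaves a Fishburn permutation, and the Fishburn condition makes
   the position of the deleted maximum reachable by one of the two rules generating
   modified ascent sequences. *)

From mathcomp Require Import all_boot zify.
Set Implicit Arguments. Unset Strict Implicit. Unset Printing Implicit Defensive.

Section SortedIndex.

Variables (T : eqType) (leT : rel T).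
Hypotheses (leT_total : total leT) (leT_tr : transitive leT)
  (leT_anti : antisymmetric leT).

Lemma sorted_leE s : sorted leT s ->
  {in s &, forall x y, leT x y = (index x s <= index y s)}.
Proof.
have leT_refl : reflexive leT by move=> x; rewrite -[leT x x]orbb leT_total.
move=> s_sorted x y xs ys; apply/idP/idP; last exact: sorted_leq_index.
move=> le_xy; rewrite leqNgt; apply/negP => lt_yx.
have le_yx := sorted_ltn_index leT_tr s_sorted y x ys xs lt_yx.
by move: lt_yx; rewrite (leT_anti (introT andP (conj le_xy le_yx))) ltnn.
Qed.

Lemma sorted_index_count s x : sorted leT s -> uniq s -> x \in s ->
  (index x s).+1 = count (leT^~ x) s.
Proof.
move=> s_sorted s_uniq xs; have x_lt := xs; rewrite -index_mem in x_lt.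
rewrite -{2}(mkseq_nth x s) /mkseq count_map.
rewrite (@eq_in_count _ _ (fun l => l <= 0 + index x s)); last first.
  move=> l; rewrite mem_iota add0n /= => l_lt.
  by rewrite -{1}(nth_index x xs) (sorted_leE s_sorted) ?mem_nth ?index_uniq.
by rewrite -size_filter filter_iota_leq // size_iota.
Qed.

End SortedIndex.

(** * Gamma as a stable sort of positions *)

Lemma gamma_rel_total : total gamma_rel.
Proof.
by move=> [a i] [b j]; rewrite /gamma_rel /=; case: ltngtP; rewrite //= leq_total.
Qed.

Lemma gamma_rel_trans : transitive gamma_rel.
Proof.
move=> [b j] [a i] [c k]; rewrite /gamma_rel /=.
case/orP=> [lt_ab|/andP[/eqP<- le_ji]]; case/orP=> [lt_bc|/andP[/eqP<- le_kj]].
- by rewrite (ltn_trans lt_ab lt_bc).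
- by rewrite lt_ab.
- by rewrite lt_bc.
- by rewrite eqxx (leq_trans le_kj le_ji) orbT.
Qed.

Lemma gamma_rel_anti : antisymmetric gamma_rel.
Proof.
move=> [a i] [b j]; rewrite /gamma_rel /=.
by case: ltngtP => //= -> /andP[le_ji le_ij]; rewrite (@anti_leq i j) ?le_ij.
Qed.

(* Positions are 1-based, as in the definition of [gamma]. *)
Definition gamma_le (x : seq nat) : rel nat :=
  fun i j => gamma_rel (nth 0 x i.-1, i) (nth 0 x j.-1, j).

Section GammaLe.

Variable x : seq nat.

Lemma gamma_le_total : total (gamma_le x).
Proof. by move=> i j; apply: gamma_rel_total. Qed.

Lemma gamma_le_trans : transitive (gamma_le x).
Proof. by move=> i j k; apply: gamma_rel_trans. Qed.

Lemma gamma_le_anti : antisymmetric (gamma_le x).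
Proof. by move=> i j /gamma_rel_anti [_ ->]. Qed.

Lemma gamma_le_refl : reflexive (gamma_le x).
Proof. by move=> i; rewrite /gamma_le /gamma_rel /= eqxx leqnn orbT. Qed.

Lemma gamma_le_leq i j : gamma_le x i j -> nth 0 x i.-1 <= nth 0 x j.-1.
Proof. by rewrite /gamma_le /gamma_rel /= => /orP[/ltnW | /andP[/eqP-> _]]. Qed.

Lemma gamma_le_ltn i j : i < j -> gamma_le x i j -> nth 0 x i.-1 < nth 0 x j.-1.
Proof.
move=> lt_ij; rewrite /gamma_le /gamma_rel /=.
by case/orP=> [// | /andP[_]]; rewrite leqNgt lt_ij.
Qed.

Lemma map_nth_iota1 : map (fun i => nth 0 x i.-1) (iota 1 (size x)) = x.
Proof. by rewrite -[1]addn0 iotaDl -map_comp -[RHS](mkseq_nth 0). Qed.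

Lemma gammaE : gamma x = sort (gamma_le x) (iota 1 (size x)).
Proof.
rewrite /gamma -{1}map_nth_iota1 -[X in zip _ X]map_id zip_map.
by rewrite sort_map -map_comp map_id.
Qed.

Lemma perm_gamma : perm_eq (gamma x) (iota 1 (size x)).
Proof. by rewrite gammaE perm_sort. Qed.

Lemma sorted_gamma : sorted (gamma_le x) (gamma x).
Proof. by rewrite gammaE; apply/sort_sorted/gamma_le_total. Qed.

Lemma uniq_gamma : uniq (gamma x).
Proof. by rewrite (perm_uniq perm_gamma) iota_uniq. Qed.

Lemma size_gamma : size (gamma x) = size x.
Proof. by rewrite (perm_size perm_gamma) size_iota. Qed.

Lemma mem_gamma i : (i \in gamma x) = (0 < i <= size x).
Proof. by rewrite (perm_mem perm_gamma) mem_iota add1n ltnS. Qed.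

Lemma gamma_is_perm : is_perm (gamma x).
Proof. by rewrite /is_perm size_gamma perm_gamma. Qed.

Lemma gamma_leE : {in gamma x &, forall i j,
  gamma_le x i j = (index i (gamma x) <= index j (gamma x))}.
Proof.
exact: sorted_leE gamma_le_total gamma_le_trans gamma_le_anti _ sorted_gamma.
Qed.

Lemma index_gamma_count i : 0 < i <= size x ->
  (index i (gamma x)).+1 = count (gamma_le x ^~ i) (iota 1 (size x)).
Proof.
move=> i_pos; rewrite -(permP perm_gamma).
apply: (sorted_index_count gamma_le_total gamma_le_trans gamma_le_anti).
- exact: sorted_gamma.
- exact: uniq_gamma.
- by rewrite mem_gamma.
Qed.

End GammaLe.

Lemma gamma_eq_sorted x s : perm_eq s (iota 1 (size x)) -> sorted (gamma_le x) s ->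
  gamma x = s.
Proof.
move=> s_perm s_sorted; apply: (sorted_eq (@gamma_le_trans x) (@gamma_le_anti x)).
- exact: sorted_gamma.
- exact: s_sorted.
- by rewrite (permPl (perm_gamma x)) perm_sym.
Qed.

(* [order_iso a b] unfolds to [size a = size b /\ order_agree (size b) a b]. *)
Definition order_agree (n : nat) (x x' : seq nat) : Prop :=
  forall s t, s < n -> t < n ->
    ((nth 0 x s < nth 0 x t) = (nth 0 x' s < nth 0 x' t)) /\
    ((nth 0 x s == nth 0 x t) = (nth 0 x' s == nth 0 x' t)).

Lemma gamma_le_agree n x x' : order_agree n x x' ->
  {in [pred i | 0 < i <= n] &, gamma_le x =2 gamma_le x'}.
Proof.
move=> agree i j /andP[i_pos le_in] /andP[j_pos le_jn].
have [lt_eq eq_eq] := agree i.-1 j.-1 ltac:(lia) ltac:(lia).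
by rewrite /gamma_le /gamma_rel /= lt_eq eq_eq.
Qed.

Lemma gamma_agree x x' s : order_agree (size x') x x' ->
  perm_eq s (iota 1 (size x')) -> sorted (gamma_le x) s -> gamma x' = s.
Proof.
move=> agree s_perm s_sorted; apply: gamma_eq_sorted => //.
rewrite -(eq_in_sorted (gamma_le_agree agree)) //.
by apply/allP => i; rewrite (perm_mem s_perm) mem_iota /=; lia.
Qed.

Lemma gamma_order_iso a b : order_iso a b -> gamma a = gamma b.
Proof.
move=> [size_ab agree]; apply/esym/(gamma_agree agree); last exact: sorted_gamma.
by rewrite -size_ab perm_gamma.
Qed.

Lemma order_iso_sym a b : order_iso a b -> order_iso b a.
Proof.
move=> [size_ab agree]; split=> // s t; rewrite size_ab => lt_s lt_t.
by have [-> ->] := agree s t lt_s lt_t.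
Qed.

Lemma order_iso_trans a b c : order_iso a b -> order_iso b c -> order_iso a c.
Proof.
move=> [size_ab agree_ab] [size_bc agree_bc]; split=> [|s t lt_s lt_t].
  by rewrite size_ab.
have [lt_s' lt_t'] : s < size b /\ t < size b by rewrite size_bc.
by have [-> ->] := agree_ab s t lt_s' lt_t'; have [-> ->] := agree_bc s t lt_s lt_t.
Qed.

Lemma order_iso_map (f : nat -> nat) w : {in w &, {mono f : c d / c < d}} ->
  order_iso (map f w) w.
Proof.
move=> f_mono; split=> [|s t lt_s lt_t]; first by rewrite size_map.
have [ws wt] := (mem_nth 0 lt_s, mem_nth 0 lt_t).
rewrite !(nth_map 0) // f_mono //; split=> //.
case: (ltngtP (nth 0 w s) (nth 0 w t)) => [lt_st | lt_ts | ->]; rewrite ?eqxx //.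
  by rewrite ltn_eqF // f_mono.
by rewrite gtn_eqF // f_mono.
Qed.

Lemma ltn_bump2 h i j : (bump h i < bump h j) = (i < j).
Proof. by rewrite !ltnNge leq_bump2. Qed.

Lemma bumpSn h i : h != i.+1 -> bump h i.+1 = (bump h i).+1.
Proof. by rewrite /bump; case: ltngtP => //; lia. Qed.

Definition insert_at (j e : nat) (s : seq nat) : seq nat :=
  take j s ++ e :: drop j s.

Section InsertAt.

Variables (j e : nat) (s : seq nat).

Lemma size_insert_at : j <= size s -> size (insert_at j e s) = (size s).+1.
Proof. by move=> le_js; rewrite size_cat /= size_take_min size_drop; lia. Qed.

Lemma nth_insert_at : j <= size s -> nth 0 (insert_at j e s) j = e.
Proof.
by move=> le_js; rewrite nth_cat size_take_min (minn_idPl le_js) ltnn subnn.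
Qed.

Lemma nth_insert_at_bump l : j <= size s ->
  nth 0 (insert_at j e s) (bump j l) = nth 0 s l.
Proof.
move=> le_js; rewrite nth_cat size_take_min (minn_idPl le_js) /bump.
case: (leqP j l) => [le_jl|lt_lj]; last by rewrite add0n lt_lj nth_take.
by rewrite add1n ltnNge leqW //= subSn //= nth_drop subnKC.
Qed.

End InsertAt.

Lemma insert_at_index s e : uniq s -> e \in s ->
  s = insert_at (index e s) e (filter (predC1 e) s).
Proof.
move=> s_uniq es; rewrite -rem_filter // remE /insert_at.
have size_take_e : size (take (index e s) s) = index e s.
  by rewrite size_take index_mem es.
rewrite take_size_cat // drop_size_cat //.
by rewrite -{2}(nth_index 0 es) -drop_nth ?index_mem // cat_take_drop.
Qed.

Lemma iota1S n : iota 1 n.+1 = iota 1 n ++ [:: n.+1].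
Proof. by rewrite -(addn1 n) iotaD add1n addn1. Qed.

Lemma filter_iota1S n : filter (predC1 n.+1) (iota 1 n.+1) = iota 1 n.
Proof.
rewrite iota1S filter_cat /= eqxx cats0; apply/all_filterP/allP => i.
by rewrite mem_iota /= => ?; apply/eqP; lia.
Qed.

Lemma gamma_rcons w a :
  gamma (rcons w a) = insert_at (count (fun c => c < a) w) (size w).+1 (gamma w).
Proof.
set n := size w.
have size_g : size (rcons w a) = n.+1 by rewrite size_rcons.
have n1_g : n.+1 \in gamma (rcons w a) by rewrite mem_gamma size_g leqnn.
rewrite {1}(insert_at_index (uniq_gamma _) n1_g).
have -> : filter (predC1 n.+1) (gamma (rcons w a)) = gamma w.
  apply/esym/(@gamma_agree (rcons w a)).
  - by move=> i k lt_in lt_kn; rewrite !nth_rcons -/n lt_in lt_kn.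
  - by rewrite -filter_iota1S -size_g perm_filter // perm_gamma.
  - exact/sorted_filter/sorted_gamma/gamma_le_trans.
congr insert_at; apply/succn_inj.
rewrite index_gamma_count ?size_g ?leqnn // iota1S count_cat /= addn0.
rewrite gamma_le_refl addn1; congr S.
rewrite -{2}(map_nth_iota1 w) count_map.
apply: eq_in_count => i; rewrite mem_iota => /andP[i_pos lt_in].
rewrite /gamma_le /gamma_rel /= !nth_rcons -/n ltnn eqxx.
by rewrite (_ : i.-1 < n) 1?(_ : n.+1 <= i = false) ?andbF ?orbF //; lia.
Qed.

(** * Modified ascent sequences *)

Lemma asc_rcons v a : 0 < size v -> asc (rcons v a) = asc v + (last 0 v < a).
Proof.
elim: v => [|b [|c v] IH] //= _; rewrite /asc /= in IH *; first by rewrite addn0.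
by rewrite IH //= addnA.
Qed.

Lemma asc_map_mono (f : nat -> nat) v : {mono f : c d / c < d} -> asc (map f v) = asc v.
Proof.
move=> f_mono; elim: v => [|b [|c v] IH] //.
by rewrite /asc /= in IH *; rewrite f_mono IH.
Qed.

Lemma bump_geE a v : bump_ge a v = map (bump a) v.
Proof. by apply: eq_map => c; rewrite /bump; case: leqP. Qed.

Lemma gamma_bump_ge a v : gamma (bump_ge a v) = gamma v.
Proof.
by rewrite bump_geE; apply/gamma_order_iso/order_iso_map => c d _ _; apply: ltn_bump2.
Qed.

Lemma count_bump_ge a v :
  count (fun c => c < a) (bump_ge a v) = count (fun c => c < a) v.
Proof.
rewrite bump_geE count_map; apply: eq_count => c /=.
by rewrite /bump; case: (leqP a c) => [le_ac | ->]; rewrite ?ltnNge ?(leq_trans le_ac).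
Qed.

Definition ascent_iff_new (x : seq nat) : Prop :=
  forall i, 0 < i < size x ->
    (nth 0 x i.-1 < nth 0 x i) = (nth 0 x i \notin take i x).

Lemma ascent_iff_new_map (f : nat -> nat) v : {mono f : c d / c < d} ->
  ascent_iff_new v -> ascent_iff_new (map f v).
Proof.
move=> f_mono v_asc i; rewrite size_map => i_lt.
have f_inj : injective f.
  move=> c d eq_f; case: (ltngtP c d) => [lt_cd | lt_dc | //].
    by move: lt_cd; rewrite -f_mono eq_f ltnn.
  by move: lt_dc; rewrite -f_mono eq_f ltnn.
rewrite !(nth_map 0) ?f_mono -?map_take ?mem_map ?v_asc //; lia.
Qed.

Lemma ascent_iff_new_rcons v a : 0 < size v -> ascent_iff_new v ->
  (last 0 v < a) = (a \notin v) -> ascent_iff_new (rcons v a).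
Proof.
move=> v_pos v_asc last_a i.
rewrite size_rcons => /andP[i_pos]; rewrite ltnS leq_eqVlt => /orP[/eqP-> | lt_iv].
  by rewrite !nth_rcons ltnn eqxx ltn_predL v_pos nth_last -cats1 take_size_cat.
have lt_i1v : i.-1 < size v by rewrite (leq_ltn_trans (leq_pred i)).
rewrite !nth_rcons lt_iv lt_i1v -cats1 takel_cat ?(ltnW lt_iv) //.
by apply: v_asc; rewrite i_pos.
Qed.

Lemma ascent_iff_new_copy x P : ascent_iff_new x -> 1 < P <= size x ->
  nth 0 x P.-1 <= nth 0 x P.-2 ->
  exists2 r, nth 0 x r.-1 = nth 0 x P.-1 & 0 < r < P.
Proof.
move=> x_asc /andP[lt_1P le_Px] no_ascent.
have earlier : nth 0 x P.-1 \in take P.-1 x.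
  by apply/negPn; rewrite -x_asc -?leqNgt //; lia.
exists (index (nth 0 x P.-1) x).+1; first exact/nth_index/mem_take/earlier.
by move: earlier; rewrite in_take_leq ?ltn_predRL // (leq_trans (leq_pred P)).
Qed.

Definition modasc_inv (x : seq nat) : Prop :=
  [/\ all (fun c => 0 < c) x, all (fun c => c <= (asc x).+1) x,
      0 < size x -> forall b, 0 < b <= (asc x).+1 -> b \in x
    & ascent_iff_new x].

Lemma last_in v : 0 < size v -> last 0 v \in v.
Proof. by case: v => //= b v _; apply: mem_last. Qed.

Lemma last_map_ne (f : nat -> nat) v : 0 < size v -> last 0 (map f v) = f (last 0 v).
Proof. by case: v => //= b v _; rewrite last_map. Qed.

Lemma modasc_inv_low v a : modasc_inv v -> 0 < size v -> 0 < a <= last 0 v ->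
  modasc_inv (rcons v a).
Proof.
move=> [v_pos v_bound v_onto v_asc] v_ne /andP[a_pos a_le].
have last_bound : last 0 v <= (asc v).+1 by apply: (allP v_bound); apply: last_in.
have a_v : a \in v by apply: v_onto; rewrite ?a_pos ?(leq_trans a_le).
have asc_eq : asc (rcons v a) = asc v by rewrite asc_rcons // ltnNge a_le addn0.
split; rewrite ?asc_eq.
- by rewrite all_rcons a_pos.
- by rewrite all_rcons v_bound (leq_trans a_le).
- by move=> _ b b_le; rewrite mem_rcons inE v_onto ?orbT.
- by apply: ascent_iff_new_rcons; rewrite // ltnNge a_le a_v.
Qed.

Lemma modasc_inv_high v a : modasc_inv v -> 0 < size v -> last 0 v < a <= (asc v).+2 ->
  modasc_inv (rcons (bump_ge a v) a).
Proof.
move=> [v_pos v_bound v_onto v_asc] v_ne /andP[last_a a_le].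
have bump_last : bump a (last 0 v) = last 0 v by rewrite /bump leqNgt last_a.
have asc_bump : asc (rcons (bump_ge a v) a) = (asc v).+1.
  rewrite bump_geE asc_rcons ?size_map // last_map_ne // bump_last last_a addn1.
  by rewrite asc_map_mono //; apply: ltn_bump2.
rewrite /modasc_inv asc_bump bump_geE; split.
- rewrite all_rcons (leq_ltn_trans _ last_a) //= all_map.
  by apply/allP => c /(allP v_pos); rewrite /= /bump; lia.
- rewrite all_rcons a_le /= all_map.
  by apply/allP => c /(allP v_bound); rewrite /= /bump; lia.
- move=> _ b /andP[b_pos b_le]; rewrite mem_rcons inE.
  case: (ltngtP b a) => [lt_ba | lt_ab | ->]; rewrite ?eqxx //=; apply/mapP.
    by exists b; rewrite ?v_onto ?b_pos /bump 1?leqNgt ?lt_ba //; lia.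
  by exists b.-1; rewrite ?v_onto /bump; lia.
- apply: ascent_iff_new_rcons; first by rewrite size_map.
    by apply: ascent_iff_new_map; [apply: ltn_bump2 | exact: v_asc].
  rewrite last_map_ne // bump_last last_a; apply/esym/negP => /mapP[c _].
  by move/eqP; rewrite (negbTE (neq_bump a c)).
Qed.

Lemma modasc_invariant x : modasc x -> modasc_inv x.
Proof.
elim=> {x} [| |v a _ v_inv v_ne a_pos a_le | v a _ v_inv v_ne last_a a_le].
- by split=> // i /andP[].
- split=> //; last by move=> [|[|i]].
  by move=> _ b; rewrite /asc /= inE => ?; apply/eqP; lia.
- by apply: modasc_inv_low; rewrite ?a_pos.
- by apply: modasc_inv_high; rewrite ?last_a.
Qed.

(** * Fishburn permutations *)

Definition fishburn_pattern (p : seq nat) (i k : nat) : Prop :=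
  [/\ i.+1 < k, k < size p, nth 0 p i < nth 0 p i.+1 & nth 0 p k = nth 0 p i - 1].

Lemma fishburnP p :
  is_fishburn p <-> is_perm p /\ ~ exists i k, fishburn_pattern p i k.
Proof.
rewrite /is_fishburn /fishburn_pattern; split=> [] [p_perm no_pat]; split=> //.
  by move=> [i [k [? ? ? ?]]]; apply: no_pat; exists i, k.
by move=> [i [k [? [? [? ?]]]]]; apply: no_pat; exists i, k.
Qed.

Lemma gamma_fishburn x : ascent_iff_new x -> is_fishburn (gamma x).
Proof.
move=> x_asc; apply/fishburnP; split=> [|[i [k [lt_ik lt_k asc_i]]]].
  exact: gamma_is_perm.
rewrite subn1; set g := gamma x in lt_k asc_i *; set P := nth 0 g i => pred_k.
set Q := nth 0 g i.+1 in asc_i.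
have g_uniq : uniq g := uniq_gamma x.
have [Pg Qg Kg] : [/\ P \in g, Q \in g & P.-1 \in g].
  by rewrite -pred_k !mem_nth // (ltn_trans _ lt_k) // ltnW.
have [iP iQ iK] : [/\ index P g = i, index Q g = i.+1 & index P.-1 g = k].
  by rewrite -pred_k !index_uniq // (ltn_trans _ lt_k) // ltnW.
move: (Pg) (Kg); rewrite !mem_gamma => /andP[_ P_le] /andP[K_pos _].
have x_PQ : nth 0 x P.-1 < nth 0 x Q.-1.
  by apply: gamma_le_ltn asc_i _; rewrite gamma_leE // iP iQ.
have x_QK : nth 0 x Q.-1 <= nth 0 x P.-2.
  by apply: gamma_le_leq; rewrite gamma_leE // iQ iK ltnW.
have P_range : 1 < P <= size x by rewrite P_le andbT; lia.
have [r x_r /andP[r_pos lt_rP]] :=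
  ascent_iff_new_copy x_asc P_range (leq_trans (ltnW x_PQ) x_QK).
have rg : r \in g by rewrite mem_gamma r_pos (leq_trans (ltnW lt_rP)).
have [le_Pr nle_rP le_rQ] : [/\ gamma_le x P r, ~~ gamma_le x r P & gamma_le x r Q].
  by rewrite /gamma_le /gamma_rel /= x_r ltnn eqxx x_PQ (ltnW lt_rP) leqNgt lt_rP.
rewrite !gamma_leE // iP iQ -ltnNge in le_Pr nle_rP le_rQ.
have r_Q : r = Q.
  by rewrite -(nth_index 0 rg); congr nth; apply/eqP; rewrite eqn_leq le_rQ.
by move: x_PQ; rewrite -r_Q x_r ltnn.
Qed.

Lemma modasc_gamma_fishburn x : modasc x -> is_fishburn (gamma x).
Proof. by move/modasc_invariant=> [_ _ _]; apply: gamma_fishburn. Qed.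

Lemma fishburn_pattern_insert_at j e s i k :
  j <= size s -> all (fun c => c < e) s -> fishburn_pattern s i k ->
  exists i' k', fishburn_pattern (insert_at j e s) i' k'.
Proof.
move=> le_js s_lt [lt_ik lt_ks asc_i pred_k].
have size_ins : size (insert_at j e s) = (size s).+1 by apply: size_insert_at.
have lt_bk : bump j k < size (insert_at j e s) by rewrite size_ins /bump; lia.
have [j_i | j_ni] := eqVneq j i.+1.
  have bump_i : bump j i = i by rewrite /bump j_i ltnn.
  exists i, (bump j k); split=> //.
  - by rewrite /bump j_i (ltnW lt_ik); lia.
  - rewrite -{1}bump_i nth_insert_at_bump // -j_i nth_insert_at //.
    by apply: (allP s_lt); rewrite mem_nth // (ltn_trans _ lt_ks) // ltnW.
  - by rewrite nth_insert_at_bump // -[in RHS]bump_i nth_insert_at_bump.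
exists (bump j i), (bump j k); split=> //.
- by rewrite -bumpSn // ltn_bump2.
- by rewrite -bumpSn // !nth_insert_at_bump.
- by rewrite !nth_insert_at_bump.
Qed.

Lemma is_perm_mem p i : is_perm p -> (i \in p) = (0 < i <= size p).
Proof. by move/perm_mem->; rewrite mem_iota add1n ltnS. Qed.

Lemma is_perm_uniq p : is_perm p -> uniq p.
Proof. by move/perm_uniq->; apply: iota_uniq. Qed.

Lemma fishburn_filter_max p n : is_fishburn p -> size p = n.+1 ->
  is_fishburn (filter (predC1 n.+1) p).
Proof.
move=> /fishburnP[p_perm no_pat] size_p; apply/fishburnP.
have n1_p : n.+1 \in p by rewrite is_perm_mem // size_p leqnn.
have p'_iota : perm_eq (filter (predC1 n.+1) p) (iota 1 n).
  by rewrite -filter_iota1S -size_p perm_filter.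
split=> [|[i [k pat]]]; first by rewrite /is_perm (perm_size p'_iota) size_iota.
apply: no_pat; rewrite (insert_at_index (is_perm_uniq p_perm) n1_p).
apply: fishburn_pattern_insert_at pat.
  by rewrite (perm_size p'_iota) size_iota -ltnS -[n.+1 in X in _ < X]size_p index_mem.
by apply/allP => c; rewrite (perm_mem p'_iota) mem_iota add1n => /andP[].
Qed.

Lemma index_gamma_new x c : 0 < c <= size x -> nth 0 x c.-1 \notin take c.-1 x ->
  (index c (gamma x)).+1 = count (fun d => d < (nth 0 x c.-1).+1) x.
Proof.
move=> c_range new_c; rewrite index_gamma_count //.
rewrite -[X in _ = count _ X](map_nth_iota1 x) count_map.
apply: eq_in_count => t; rewrite mem_iota add1n ltnS => /andP[t_pos le_tx] /=.
rewrite /gamma_le /gamma_rel /= [in RHS]ltnS [in RHS]leq_eqVlt orbC; congr orb.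
case: eqP => //= x_tc; rewrite leqNgt; apply/negP => lt_tc.
have lt_tc1 : t.-1 < c.-1 by lia.
move/negP: new_c; apply; rewrite -x_tc -(nth_take 0 lt_tc1) mem_nth //.
case/andP: c_range => _ c_le.
by rewrite size_take_min leq_min lt_tc1 (leq_trans lt_tc1) // (leq_trans (leq_pred c)).
Qed.

Lemma fishburn_insert_new v j : ascent_iff_new v -> j < size v ->
  is_fishburn (insert_at j.+1 (size v).+1 (gamma v)) ->
  nth 0 v (nth 0 (gamma v) j).-1 \notin take (nth 0 (gamma v) j).-1 v.
Proof.
move=> v_asc lt_jv /fishburnP[_ no_pat].
set g := gamma v in no_pat *; set c := nth 0 g j.
have size_g : size g = size v := size_gamma v.
have cg : c \in g by rewrite mem_nth ?size_g.
have c_idx : index c g = j by rewrite index_uniq ?size_g ?uniq_gamma.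
move: (cg); rewrite mem_gamma => /andP[c_pos c_le].
have [c1 | lt_1c] := leqP c 1; first by rewrite (_ : c.-1 = 0) ?take0 //; lia.
have c1g : c.-1 \in g by rewrite mem_gamma; lia.
(* [c] is followed by the maximum, so [c - 1] cannot come later in [g] *)
have lt_mj : index c.-1 g < j.
  set m := index c.-1 g; rewrite ltnNge; apply/negP => le_jm.
  have nth_m : nth 0 g m = c.-1 by apply: nth_index.
  have lt_jm : j < m.
    by rewrite ltn_neqAle le_jm andbT; apply/eqP => j_m; move: nth_m; rewrite -j_m; lia.
  have [bump_j bump_m] : bump j.+1 j = j /\ bump j.+1 m = m.+1.
    by rewrite /bump ltnn lt_jm.
  have p_j : nth 0 (insert_at j.+1 (size v).+1 g) j = c.
    by rewrite -[X in nth _ _ X]bump_j nth_insert_at_bump ?size_g.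
  have p_m : nth 0 (insert_at j.+1 (size v).+1 g) m.+1 = c.-1.
    by rewrite -bump_m nth_insert_at_bump ?size_g.
  apply: no_pat; exists j, m.+1; split.
  - exact: lt_jm.
  - by rewrite size_insert_at ?size_g // ltnS -size_g index_mem.
  - by rewrite p_j nth_insert_at ?size_g // ltnS.
  - by rewrite p_j p_m subn1.
have : gamma_le v c.-1 c by rewrite gamma_leE // c_idx ltnW.
have lt_c1c : c.-1 < c by rewrite ltn_predL.
by move/(gamma_le_ltn lt_c1c); rewrite v_asc //; lia.
Qed.

Lemma fishburn_insert_count v j : modasc_inv v -> j <= size v ->
  is_fishburn (insert_at j (size v).+1 (gamma v)) ->
  exists2 a, 0 < a <= (asc v).+2 & count (fun c => c < a) v = j.
Proof.
move=> [v_pos v_bound _ v_asc]; case: j => [_ _ | j lt_jv v_fish].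
  exists 1 => //; rewrite (eq_in_count (a2 := pred0)) ?count_pred0 //.
  by move=> c /(allP v_pos) c_pos; rewrite /= ltnNge c_pos.
set c := nth 0 (gamma v) j.
have /andP[c_pos c_le] : 0 < c <= size v by rewrite -mem_gamma mem_nth ?size_gamma.
exists (nth 0 v c.-1).+1.
  rewrite /= ltnS; apply: (allP v_bound).
  by rewrite mem_nth // (leq_trans _ c_le) // ltn_predL.
rewrite -(index_gamma_new (x := v) (c := c)) ?c_pos ?c_le ?fishburn_insert_new //.
by rewrite index_uniq ?size_gamma ?uniq_gamma.
Qed.

Lemma fishburn_modasc p : is_fishburn p -> exists2 x, modasc x & gamma x = p.
Proof.
move: {2}(size p) (erefl (size p)) => n; elim: n p => [|[|n] IH] p size_p p_fish.
- by exists [::]; [exact: modasc_nil | case: p size_p p_fish].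
- exists [:: 1]; first exact: modasc_one.
  case: p size_p p_fish => [|d [|]] //= _ [d_perm _].
  have := is_perm_mem d d_perm; rewrite inE eqxx => /esym /andP[d_pos d_le].
  by rewrite (_ : d = 1) //; apply/eqP; rewrite eqn_leq d_le.
have [p_perm _] := p_fish.
have p_uniq := is_perm_uniq p_perm.
have n2_p : n.+2 \in p by rewrite is_perm_mem // size_p leqnn.
have p_ins := insert_at_index p_uniq n2_p.
have [v v_modasc gamma_v] : exists2 v, modasc v & gamma v = filter (predC1 n.+2) p.
  apply: IH (fishburn_filter_max p_fish size_p).
  by rewrite -rem_filter // size_rem // size_p.
have size_v : size v = n.+1.
  by rewrite -size_gamma gamma_v -rem_filter // size_rem // size_p.
have [a a_range count_a] : exists2 a, 0 < a <= (asc v).+2 &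
    count (fun c => c < a) v = index n.+2 p.
  apply: fishburn_insert_count (modasc_invariant v_modasc) _ _.
    by rewrite size_v -ltnS -[n.+2 in X in _ < X]size_p index_mem.
  by rewrite size_v gamma_v -p_ins.
have v_ne : 0 < size v by rewrite size_v.
case/andP: a_range => a_pos a_le; case: (leqP a (last 0 v)) => [le_a | lt_a].
  exists (rcons v a); first exact: modasc_low.
  by rewrite gamma_rcons count_a size_v gamma_v -p_ins.
exists (rcons (bump_ge a v) a); first exact: modasc_high.
rewrite gamma_rcons count_bump_ge gamma_bump_ge bump_geE size_map.
by rewrite count_a size_v gamma_v -p_ins.
Qed.

(** * Pattern avoidance *)

Section GammaMask.

Variables (x : seq nat) (m : bitseq).
Hypothesis size_m : size m = size x.

(* [f t] is the position in [x] of the [t]-th letter of [mask m x], all positions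
   being 1-based; the padding 0 makes [f] strictly increasing from [f 0 = 0]. *)
Let U := mask m (iota 1 (size x)).
Let f := nth 0 (0 :: U).
Let w := mask m x.

Lemma size_mask_pos : size U = size w.
Proof. by rewrite !size_mask ?size_iota. Qed.

Lemma mask_pos_mono : {in [pred t | t <= size w] &, {mono f : a b / a <= b}}.
Proof.
have U_sorted : sorted ltn (0 :: U).
  exact: (path_mask ltn_trans m (iota_ltn_sorted 0 (size x).+1)).
apply: leq_mono_in => a b; rewrite !inE -ltnS -size_mask_pos => lt_a lt_b.
exact: (sorted_ltn_nth ltn_trans).
Qed.

Lemma map_mask_pos : map f (iota 1 (size w)) = U.
Proof.
have := map_nth_iota0 0 (leqnn (size (0 :: U))).
by rewrite take_size /= size_mask_pos => -[].
Qed.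

Lemma nth_mask_pos a : 0 < a <= size w -> nth 0 w a.-1 = nth 0 x (f a).-1.
Proof.
case: a => // a /andP[_ lt_aw].
by rewrite /w -[in LHS](map_nth_iota1 x) -map_mask (nth_map 0) ?size_mask_pos.
Qed.

Lemma gamma_mask : filter (mem U) (gamma x) = map f (gamma w).
Proof.
rewrite gammaE filter_sort; [|exact: gamma_le_total|exact: gamma_le_trans].
rewrite -mask_filter ?iota_uniq // -/U -map_mask_pos sort_map; congr map.
have range : all [pred t | 0 < t <= size w] (iota 1 (size w)).
  by apply/allP => t; rewrite mem_iota add1n ltnS.
apply/esym/gamma_eq_sorted; first by rewrite perm_sort.
rewrite (eq_in_sorted (P := [pred t | 0 < t <= size w]) (e' := relpre f (gamma_le x))).
- by apply: sort_sorted => a b; apply: gamma_le_total.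
- move=> a b /[dup] a_range /andP[_ a_le] /[dup] b_range /andP[_ b_le].
  by rewrite /relpre /gamma_le !nth_mask_pos //= /gamma_rel /= mask_pos_mono ?inE.
- by apply/allP => t; rewrite mem_sort => /(allP range).
Qed.

Lemma order_iso_gamma_mask : order_iso (filter (mem U) (gamma x)) (gamma w).
Proof.
rewrite gamma_mask; apply: order_iso_map => a b; rewrite !mem_gamma.
move=> /andP[_ a_le] /andP[_ b_le].
by rewrite !ltnNge mask_pos_mono.
Qed.

Lemma contains_gamma_mask : contains (gamma x) (gamma w).
Proof.
exists (map (mem U) (gamma x)); split; first by rewrite size_map.
by rewrite -filter_mask; apply: order_iso_gamma_mask.
Qed.

End GammaMask.

Lemma count_iota1_ltn k v : 0 < v <= k.+1 -> count (fun u => u < v) (iota 1 k) = v.-1.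
Proof.
move=> /andP[v_pos v_le]; have le_v1k : v.-1 <= k by lia.
have := filter_iota_ltn 1 le_v1k; rewrite add1n prednK // => filter_v.
by rewrite -size_filter filter_v size_iota.
Qed.

Lemma nth_perm_count c k s : perm_eq c (iota 1 k) -> s < size c ->
  nth 0 c s = (count (fun u => u < nth 0 c s) c).+1.
Proof.
move=> c_perm lt_s; have := mem_nth 0 lt_s.
rewrite (perm_mem c_perm) mem_iota add1n => /andP[c_pos c_lt].
by rewrite (permP c_perm) count_iota1_ltn ?prednK // c_pos ltnW.
Qed.

Lemma perm_order_iso_eq a b k : perm_eq a (iota 1 k) -> perm_eq b (iota 1 k) ->
  order_iso a b -> a = b.
Proof.
move=> a_perm b_perm [size_ab agree]; apply: (eq_from_nth (x0 := 0)) => // s lt_s.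
have lt_s' : s < size b by rewrite -size_ab.
rewrite (nth_perm_count a_perm lt_s) (nth_perm_count b_perm lt_s'); congr S.
rewrite -[X in count _ X = _](mkseq_nth 0 a) -[X in _ = count _ X](mkseq_nth 0 b).
rewrite /mkseq !count_map size_ab; apply: eq_in_count => t.
by rewrite mem_iota => /andP[_ lt_t] /=; have [-> _] := agree t s lt_t lt_s'.
Qed.

Lemma wmax_le x d : all (fun c => c <= d) x -> wmax x <= d.
Proof. by elim: x => //= c x IH /andP[le_cd /IH]; rewrite geq_max le_cd. Qed.

Definition std (w : seq nat) : seq nat :=
  map (fun a => (index a (sort leq (undup w))).+1) w.

Section Std.

Variable w : seq nat.
Local Notation u := (sort leq (undup w)).

Lemma mem_std_ranks a : (a \in u) = (a \in w).
Proof. by rewrite mem_sort mem_undup. Qed.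

Lemma std_ranks_mono : {in w &, {mono index^~ u : a b / a <= b}}.
Proof.
move=> a b; rewrite -!mem_std_ranks => au bu.
by rewrite -(sorted_leE leq_total leq_trans anti_leq) //; apply/sort_sorted/leq_total.
Qed.

Lemma order_iso_std : order_iso w (std w).
Proof.
split=> [|s t]; rewrite ?size_map // => lt_s lt_t.
have [ws wt] := (mem_nth 0 lt_s, mem_nth 0 lt_t).
rewrite !(nth_map 0) // ltnS eqSS (leqW_mono_in std_ranks_mono) //.
by rewrite (inj_in_eq (incn_inj_in std_ranks_mono)).
Qed.

Lemma std_cayley : is_cayley (std w).
Proof.
have u_uniq : uniq u by rewrite sort_uniq undup_uniq.
apply/andP; split; first by apply/allP => c /mapP[a _ ->].
apply/allP => j; rewrite mem_iota add1n ltnS => /andP[j_pos le_j].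
have lt_ju : j.-1 < size u.
  rewrite prednK // (leq_trans le_j) //; apply/wmax_le/allP => c /mapP[a aw ->].
  by rewrite index_mem mem_std_ranks.
apply/mapP; exists (nth 0 u j.-1); first by rewrite -mem_std_ranks mem_nth.
by rewrite index_uniq // prednK.
Qed.

End Std.

Lemma gamma_contains_mask x v : contains (gamma x) v ->
  exists2 m : bitseq, size m = size x & order_iso (gamma (mask m x)) v.
Proof.
move=> [m' [_ iso_v]]; set V := mask m' (gamma x) in iso_v.
pose m := map (mem V) (iota 1 (size x)).
have size_m : size m = size x by rewrite size_map size_iota.
exists m => //; apply: order_iso_trans iso_v; apply: order_iso_sym.
have <- : filter (mem (mask m (iota 1 (size x)))) (gamma x) = V.
  rewrite -filter_mask [RHS](mask_filter _ (uniq_gamma x)); apply: eq_in_filter => i.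
  by rewrite mem_gamma !inE mem_filter mem_iota add1n ltnS => ->; rewrite andbT.
exact: order_iso_gamma_mask.
Qed.

Lemma avoids_classP x y :
  (forall z, is_cayley z -> gamma z = gamma y -> avoids x z) <->
  avoids (gamma x) (gamma y).
Proof.
split=> [avoid_x | avoid_gx z _ gamma_z [m [size_m iso_z]]]; last first.
  apply: avoid_gx; rewrite -gamma_z -(gamma_order_iso iso_z).
  exact: contains_gamma_mask.
move=> /gamma_contains_mask[m size_m iso_y].
have gamma_w : gamma (mask m x) = gamma y.
  apply: (perm_order_iso_eq (perm_gamma _) _ iso_y).
  by case: iso_y; rewrite !size_gamma => -> _; apply: perm_gamma.
apply: (avoid_x (std (mask m x))); first exact: std_cayley.
  by rewrite -(gamma_order_iso (order_iso_std _)).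
by exists m; split; last exact: order_iso_std.
Qed.

Lemma gamma_perm_inv sigma : is_perm sigma -> gamma (perm_inv sigma) = sigma.
Proof.
move=> sigma_perm; set n := size sigma.
have sigma_uniq := is_perm_uniq sigma_perm.
have mem_sigma j : (j \in sigma) = (0 < j <= n) by apply: is_perm_mem.
have size_inv : size (perm_inv sigma) = n by rewrite size_map size_iota.
have nth_inv j : 0 < j <= n -> nth 0 (perm_inv sigma) j.-1 = (index j sigma).+1.
  move=> /andP[j_pos le_jn].
  by rewrite (nth_map 0) ?size_iota ?nth_iota ?add1n ?prednK // -ltnS prednK.
apply: gamma_eq_sorted; first by rewrite size_inv.
rewrite -[X in sorted _ X](mkseq_nth 0 sigma) /mkseq sorted_map.
apply: (sub_in_sorted (P := gtn n) (e := ltn)) (iota_ltn_sorted 0 n); last first.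
  by apply/allP => l; rewrite mem_iota.
move=> l l' lt_ln lt_l'n lt_ll'; rewrite /relpre /gamma_le /gamma_rel /=.
by rewrite !nth_inv -?mem_sigma ?mem_nth // !index_uniq // ltnS (lt_ll' : l < l').
Qed.

Lemma gamma_image_avoid_class y p :
  gamma_image (avoid_class modasc y) p <-> fishburn_avoiding (gamma y) p.
Proof.
split=> [[x [[x_modasc x_avoid] <-]] | [p_fish p_avoid]].
  by split; [apply: modasc_gamma_fishburn | apply/avoids_classP].
have [x x_modasc gamma_x] := fishburn_modasc p_fish.
by exists x; split=> //; split=> //; apply/avoids_classP; rewrite gamma_x.
Qed.

Theorem theorem5p1 (sigma y : seq nat) :
  is_perm sigma -> is_cayley y ->
  (forall p, fishburn_avoiding sigma p <->
             gamma_image (avoid_class modasc (perm_inv sigma)) p) /\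
  (forall p, gamma_image (avoid_class modasc y) p <->
             fishburn_avoiding (gamma y) p).
Proof.
move=> sigma_perm _; split=> p; last exact: gamma_image_avoid_class.
by rewrite gamma_image_avoid_class gamma_perm_inv.
Qed.
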